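(* Let $\mathcal{D}$ be a $2$-$(|\mathcal{P}|,r+1,\lambda)$ design with point set $\mathcal{P}$, where $r>1$, admitting a group $G$ of automorphisms that is 2-transitive on points and transitive on blocks. Then there is at most one feasible $G$-orbit on the set of flags of $\mathcal{D}$.
   Context: Designs have no repeated blocks; blocks are identified with their point sets. A flag is a pair $(\sigma,L)$ with $\sigma$ a point and $L$ a block containing $\sigma$. For a $G$-orbit $\Omega$ on flags and a point $\sigma$, $\Omega(\sigma)$ is the set of flags of $\Omega$ with point-entry $\sigma$. $\Omega$ is feasible if $|\Omega(\sigma)|\ge 2$ for some (hence all) point $\sigma$, and for some (hence all) flag $(\sigma,L)\in\Omega$ the setwise stabilizer $G_{\sigma,L}$ of $L$ in $G_\sigma$ is transitive on $L\setminus\{\sigma\}$. *)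

From mathcomp Require Import all_boot all_fingroup.
Set Implicit Arguments. Unset Strict Implicit. Unset Printing Implicit Defensive.
Local Open Scope group_scope.

Section Designs.
Variable T : finType.

Definition blockimg (g : {perm T}) (L : {set T}) : {set T} := [set g x | x in L].

(* B is a 2-(|T|, k, lam) design on point set T (blocks identified with their
   point sets, so no repeated blocks). *)
Definition is_2design (B : {set {set T}}) (k lam : nat) : Prop :=
  (0 < lam)%N /\
  (forall L, L \in B -> #|L| = k) /\
  (forall x y : T, x != y -> #|[set L in B | (x \in L) && (y \in L)]| = lam).

Definition is_aut_group (B : {set {set T}}) (G : {group {perm T}}) : Prop :=
  forall g L, g \in G -> L \in B -> blockimg g L \in B.

Definition two_transitive (G : {group {perm T}}) : Prop :=
  forall x y x' y' : T, x != y -> x' != y' ->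
    exists2 g, g \in G & g x = x' /\ g y = y'.

Definition block_transitive (B : {set {set T}}) (G : {group {perm T}}) : Prop :=
  forall L L', L \in B -> L' \in B -> exists2 g, g \in G & blockimg g L = L'.

Definition flags (B : {set {set T}}) : {set T * {set T}} :=
  [set f | (f.2 \in B) && (f.1 \in f.2)].

Definition flagact (g : {perm T}) (f : T * {set T}) : T * {set T} :=
  (g f.1, blockimg g f.2).

Definition flag_orbit (G : {group {perm T}}) (f : T * {set T}) : {set T * {set T}} :=
  [set flagact g f | g in G].

Definition orbit_at (Om : {set T * {set T}}) (s : T) : {set T * {set T}} :=
  [set f in Om | f.1 == s].

Definition flag_stab (G : {group {perm T}}) (s : T) (L : {set T}) : {set {perm T}} :=
  [set g in G | (g s == s) && (blockimg g L == L)].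

Definition feasible (G : {group {perm T}}) (Om : {set T * {set T}}) : Prop :=
  (exists s : T, (2 <= #|orbit_at Om s|)%N) /\
  (exists2 f, f \in Om &
     forall x y, x \in f.2 :\ f.1 -> y \in f.2 :\ f.1 ->
       exists2 g, g \in flag_stab G f.1 f.2 & g x = y).

End Designs.

From mathcomp Require Import all_boot all_fingroup zify.
Set Implicit Arguments. Unset Strict Implicit. Unset Printing Implicit Defensive.
Local Open Scope group_scope.

(* As G is transitive on blocks, two feasible flag orbits contain flags
   (a, L) and (b, L) on a common block L with G_{a,L} transitive on L \ {a}
   and G_{b,L} transitive on L \ {b}.  If a <> b, pick a third point c on L
   (|L| = r + 1 >= 3): some h1 in G_{a,L} maps b to c and some h2 in G_{b,L}
   maps c to a, so h1 h2 maps (b, L) to (a, L).  Neither 2-transitivity nor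
   the index lambda of the design is needed. *)

Section FlagAction.
Variable T : finType.
Implicit Types (g h : {perm T}) (L : {set T}) (f : T * {set T}).

Lemma blockimgM g h L : blockimg (g * h) L = blockimg h (blockimg g L).
Proof. by rewrite /blockimg -imset_comp; apply: eq_imset => x /=; rewrite permM. Qed.

Lemma blockimg1 L : blockimg 1 L = L.
Proof. by rewrite /blockimg (eq_imset _ (@perm1 T)) imset_id. Qed.

Lemma blockimgK g L : blockimg g^-1 (blockimg g L) = L.
Proof. by rewrite -blockimgM mulgV blockimg1. Qed.

Lemma mem_blockimg g L x : (g x \in blockimg g L) = (x \in L).
Proof. exact/mem_imset/perm_inj. Qed.

Lemma flagactM g h f : flagact (g * h) f = flagact h (flagact g f).
Proof. by rewrite /flagact /= permM blockimgM. Qed.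

Lemma flags_flagact (B : {set {set T}}) (G : {group {perm T}}) g f :
  is_aut_group B G -> g \in G -> f \in flags B -> flagact g f \in flags B.
Proof.
move=> autB gG; rewrite !inE /= => /andP[LB aL].
by rewrite mem_blockimg aL andbT; apply: autB.
Qed.

Variable G : {group {perm T}}.

Lemma flag_orbit_flags (B : {set {set T}}) f : is_aut_group B G ->
  f \in flags B -> flag_orbit G f \subset flags B.
Proof.
move=> autB fB; apply/subsetP => _ /imsetP[g gG ->].
exact: flags_flagact autB gG fB.
Qed.

Lemma flag_orbit_act g f : g \in G -> flag_orbit G (flagact g f) = flag_orbit G f.
Proof.
move=> gG; apply/setP => f'; apply/imsetP/imsetP => [[h hG ->]|[h hG ->]].
  by exists (g * h); rewrite ?groupM // flagactM.
exists (g^-1 * h); first by rewrite groupM ?groupV.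
by rewrite -flagactM mulgA mulgV mul1g.
Qed.

Lemma flag_orbit_eq f f' : f' \in flag_orbit G f -> flag_orbit G f' = flag_orbit G f.
Proof. by case/imsetP => g gG ->; rewrite flag_orbit_act. Qed.

Definition flag_stab_transitive a L : Prop :=
  forall x y, x \in L :\ a -> y \in L :\ a ->
    exists2 g, g \in flag_stab G a L & g x = y.

Lemma flag_stab_transitiveJ h a L : h \in G ->
  flag_stab_transitive a L -> flag_stab_transitive (h a) (blockimg h L).
Proof.
move=> hG trL x' y' /setD1P[xa /imsetP[x xL ex]] /setD1P[ya /imsetP[y yL ey]].
subst; rewrite !(inj_eq perm_inj) in xa ya.
have [g] := trL x y (introT setD1P (conj xa xL)) (introT setD1P (conj ya yL)).
rewrite inE => /and3P[gG /eqP ga /eqP gL] gxy.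
exists (h^-1 * g * h); last by rewrite !permM permK gxy.
by rewrite inE !groupM ?groupV //= !permM permK ga !blockimgM blockimgK gL !eqxx.
Qed.

Lemma third_point L a b : 2 < #|L| -> exists2 c, c \in L & (c != a) && (c != b).
Proof.
move=> L_gt2; have /card_gt0P[c] : 0 < #|L :\ a :\ b|.
  by move: L_gt2; rewrite (cardsD1 a L) (cardsD1 b (L :\ a)); lia.
by rewrite !inE => /and3P[cb ca cL]; exists c; rewrite ?ca.
Qed.

Lemma flag_orbit_same_block a b L : 2 < #|L| -> a \in L -> b \in L ->
  flag_stab_transitive a L -> flag_stab_transitive b L ->
  flag_orbit G (a, L) = flag_orbit G (b, L).
Proof.
move=> L_gt2 aL bL trA trB; have [-> //|ba] := eqVneq b a.
have ab : a != b by rewrite eq_sym.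
have [c cL /andP[ca cb]] := third_point a b L_gt2.
have [h1 /setIdP[h1G /andP[_ /eqP h1L]] h1b] :=
  trA b c (introT setD1P (conj ba bL)) (introT setD1P (conj ca cL)).
have [h2 /setIdP[h2G /andP[_ /eqP h2L]] h2c] :=
  trB c a (introT setD1P (conj cb cL)) (introT setD1P (conj ab aL)).
rewrite -(flag_orbit_act (b, L) (groupM h1G h2G)).
by rewrite /flagact /= permM h1b h2c blockimgM h1L h2L.
Qed.
End FlagAction.

Theorem lemma3p1 (T : finType) (B : {set {set T}}) (r lam : nat)
  (G : {group {perm T}}) :
  (1 < r)%N ->
  is_2design B r.+1 lam ->
  is_aut_group B G ->
  two_transitive G ->
  block_transitive B G ->
  forall f1 f2, f1 \in flags B -> f2 \in flags B ->
    feasible G (flag_orbit G f1) -> feasible G (flag_orbit G f2) ->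
    flag_orbit G f1 = flag_orbit G f2.
Proof.
move=> r_gt1 [_ [cardB _]] autB _ transB f1 f2 f1B f2B.
move=> [_ [[a L] aLf1 trA]] [_ [[b M] bMf2 trB]].
have := subsetP (flag_orbit_flags autB f1B) _ aLf1; rewrite inE => /andP[/= LB aL].
have := subsetP (flag_orbit_flags autB f2B) _ bMf2; rewrite inE => /andP[/= MB bM].
rewrite -(flag_orbit_eq aLf1) -(flag_orbit_eq bMf2).
have [g gG gML] := transB M L MB LB.
rewrite -(flag_orbit_act (b, M) gG) /flagact /= gML.
apply: flag_orbit_same_block => //; first by rewrite cardB.
  by rewrite -gML mem_blockimg.
by rewrite -gML; apply: flag_stab_transitiveJ.
Qed.
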